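(* Let $\Delta$ be a $d$-dimensional simplicial forest. Then $f_0 \geq f_d$, where $f_i$ denotes the number of $i$-dimensional faces of $\Delta$.
   Context: A simplicial complex $\Delta$ is a collection of subsets (faces) of a finite vertex set closed under taking subsets; facets are maximal faces, $\dim \tau = |\tau|-1$, and $\dim\Delta$ is the maximal dimension of a face. For facets $F_1,\dots,F_s$ write $\Delta=\langle F_1,\dots,F_s\rangle$. A facet $F$ of $\Delta$ is a leaf if either $F$ is the only facet of $\Delta$, or there is a facet $G\neq F$ of $\Delta$ with $F\cap F'\subseteq F\cap G$ for every facet $F'\neq F$ of $\Delta$. $\Delta$ is a simplicial tree if $\Delta$ is connected and every subcomplex of the form $\langle F_{i_1},\dots,F_{i_r}\rangle$ (generated by a nonempty subset of the facets) has a leaf. $\Delta$ is a simplicial forest if every connected component of $\Delta$ is a simplicial tree. *)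

From mathcomp Require Import all_boot.
Set Implicit Arguments. Unset Strict Implicit. Unset Printing Implicit Defensive.

Definition simplicial_complex (T : finType) (D : {set {set T}}) : Prop :=
  forall F G : {set T}, F \in D -> G \subset F -> G \in D.

Section SC.
Variable T : finType.
Implicit Types (D S : {set {set T}}) (F G : {set T}).

Definition facets D : {set {set T}} :=
  [set F in D | [forall G in D, (F \subset G) ==> (G == F)]].

Definition gen S : {set {set T}} := [set G : {set T} | [exists F in S, G \subset F]].

Definition is_leaf D F : bool :=
  (F \in facets D) &&
  ((facets D == [set F]) ||
   [exists G in facets D, (G != F) &&
      [forall F' in facets D, (F' != F) ==> (F :&: F' \subset F :&: G)]]).

Definition facet_adj D : rel {set T} :=
  [rel A B | [&& A \in facets D, B \in facets D & A :&: B != set0]].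

Definition sc_connected D : Prop :=
  forall F G, F \in facets D -> G \in facets D -> connect (facet_adj D) F G.

Definition simplicial_tree D : Prop :=
  sc_connected D /\
  forall S, S \subset facets D -> S != set0 -> exists F, is_leaf (gen S) F.

Definition component D F : {set {set T}} :=
  gen [set G in facets D | connect (facet_adj D) F G].

Definition simplicial_forest D : Prop :=
  forall F, F \in facets D -> simplicial_tree (component D F).

(* f_i = number of i-dimensional faces (faces with i+1 vertices) *)
Definition fvec D (i : nat) : nat := #|[set F in D | #|F| == i.+1]|.

Definition has_dim D (d : nat) : Prop :=
  (exists2 F, F \in D & #|F| = d.+1) /\ (forall F, F \in D -> #|F| <= d.+1).
End SC.

From mathcomp Require Import all_boot.
Set Implicit Arguments. Unset Strict Implicit. Unset Printing Implicit Defensive.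

(** In a simplicial forest every nonempty family S of facets contains a facet
   with a vertex lying in no other member of S: take a leaf of the subcomplex
   generated by the members of S in one connected component; a vertex of the
   leaf outside its "branch" facet G is in no other member of that component,
   and a member of another component cannot meet the leaf at all.  Removing
   such facets one at a time loses a vertex at each step, so a family of facets
   is no larger than the set of vertices it covers.  Faces of top dimension d
   are facets, hence f_d <= f_0. *)

Section Forests.
Variable T : finType.
Implicit Types (D S : {set {set T}}) (F G L : {set T}).

Definition has_private_vertex S L := ~~ (L \subset cover (S :\ L)).

Lemma genP S G : reflect (exists2 F, F \in S & G \subset F) (G \in gen S).
Proof. by rewrite inE; apply: exists_inP. Qed.

Lemma gen_subset S F G : F \in S -> G \subset F -> G \in gen S.
Proof. by move=> FS GF; apply/genP; exists F. Qed.

Lemma facet_subset_eq D F G :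
  F \in facets D -> G \in facets D -> F \subset G -> F = G.
Proof.
rewrite inE => /andP[_ /forall_inP maxF] /setIdP[GD _] FG.
by apply/esym/eqP; apply: (implyP (maxF G GD)).
Qed.

Lemma facets_gen D S : S \subset facets D -> facets (gen S) = S.
Proof.
move=> /subsetP SD; apply/setP=> F; rewrite inE.
apply/andP/idP => [[/genP[G GS FG] /forall_inP maxF] | FS].
  suff /eqP <- : G == F by [].
  exact: implyP (maxF G (gen_subset GS (subxx G))) FG.
split; first exact: gen_subset FS (subxx F).
apply/forall_inP=> H /genP[G GS HG]; apply/implyP=> FH.
have FG := facet_subset_eq (SD F FS) (SD G GS) (subset_trans FH HG).
by rewrite eqEsubset FH FG HG.
Qed.

Lemma set0_notin_facets D F : F \in D -> F != set0 -> set0 \notin facets D.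
Proof.
move=> FD; apply: contraNN; rewrite inE => /andP[_ /forall_inP max0].
by apply: (implyP (max0 F FD)); rewrite sub0set.
Qed.

Lemma top_faces_facets D d : (forall F, F \in D -> #|F| <= d.+1) ->
  [set F in D | #|F| == d.+1] \subset facets D.
Proof.
move=> dimD; apply/subsetP=> F /setIdP[FD /eqP cardF]; rewrite inE FD /=.
apply/forall_inP=> G GD; apply/implyP=> FG.
by rewrite eq_sym eqEcard FG cardF dimD.
Qed.

Lemma fvec0_cover D : simplicial_complex D -> fvec D 0 = #|cover D|.
Proof.
move=> scD; rewrite /fvec -(card_imset _ (@set1_inj T)); apply: eq_card => F.
rewrite inE.
apply/andP/imsetP => [[FD /cards1P[x defF]] | [x /bigcupP[G GD xG] ->]].
  by exists x => //; apply/bigcupP; exists F; rewrite // defF set11.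
by rewrite cards1; split => //; apply: scD GD _; rewrite sub1set.
Qed.

Lemma card_le_cover S :
  (forall S', S' \subset S -> S' != set0 ->
     exists2 L, L \in S' & has_private_vertex S' L) ->
  #|S| <= #|cover S|.
Proof.
have [n] := ubnP #|S|; elim: n S => // n IH S ltSn privS.
have [-> | /(privS S (subxx S))[L LS privL]] := eqVneq S set0.
  by rewrite cards0.
have SLn : #|S :\ L| < n by move: ltSn; rewrite (cardsD1 L S) LS.
have privSL S' : S' \subset S :\ L -> S' != set0 ->
    exists2 L', L' \in S' & has_private_vertex S' L'.
  by move=> /subset_trans/(_ (subsetDl S [set L])); apply: privS.
rewrite (cardsD1 L S) LS /cover (big_setD1 L LS) /= add1n.
apply: leq_ltn_trans (IH _ SLn privSL) (proper_card _).
exact: properUr.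
Qed.

Lemma leaf_has_private_vertex D L :
  set0 \notin facets D -> is_leaf D L -> has_private_vertex (facets D) L.
Proof.
move=> nzD /andP[LD /orP[/eqP defD | /exists_inP[G GD /andP[GL sepG]]]].
  rewrite /has_private_vertex defD setDv /cover big_set0 subset0.
  by apply: contraNneq nzD => <-.
have /subsetPn[v vL vG] : ~~ (L \subset G).
  by apply: contra GL => /(facet_subset_eq LD GD) ->.
apply/subsetPn; exists v => //; apply/bigcupP => -[F' /setD1P[F'L F'D] vF'].
have /subsetP/(_ v) := implyP (forall_inP sepG F' F'D) F'L.
by rewrite !inE vL vF' (negbTE vG) => /(_ isT).
Qed.

Lemma forest_has_private_vertex D S :
  simplicial_forest D -> set0 \notin facets D ->
  S \subset facets D -> S != set0 ->
  exists2 L, L \in S & has_private_vertex S L.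
Proof.
move=> forestD nzD SD /set0Pn[F FS]; have FD := subsetP SD F FS.
set C := [set G in facets D | connect (facet_adj D) F G].
have CD : C \subset facets D by apply/subsetP=> G /setIdP[].
set SC := S :&: C.
have SCD : SC \subset facets D := subset_trans (subsetIl S C) SD.
have [_ leafC] := forestD F FD.
have [L leafL] : exists L, is_leaf (gen SC) L.
  apply: leafC; first by rewrite /component (facets_gen CD) subsetIr.
  by apply/set0Pn; exists F; rewrite /SC /C in_setI FS inE FD connect0.
have privL : has_private_vertex SC L.
  rewrite -(facets_gen SCD); apply: leaf_has_private_vertex leafL.
  by rewrite (facets_gen SCD); apply: contra (subsetP SCD set0) nzD.
have /setIP[LS /setIdP[LD FL]] : L \in SC.
  by rewrite -(facets_gen SCD); case/andP: leafL.
exists L => //; apply: contra privL.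
move=> /subsetP coverL; apply/subsetP=> x xL.
have /bigcupP[F' /setD1P[F'L F'S] xF'] := coverL x xL.
have F'D := subsetP SD F' F'S.
apply/bigcupP; exists F' => //.
rewrite /SC /C !in_setD1 F'L in_setI F'S inE F'D /=.
(* F' shares the vertex x with L, so it lies in the component of L. *)
apply: connect_trans FL (connect1 _); apply/and3P; split => //.
by apply/set0Pn; exists x; rewrite inE xL.
Qed.

End Forests.

Theorem lemma2p5 (T : finType) (D : {set {set T}}) (d : nat) :
  simplicial_complex D -> has_dim D d -> simplicial_forest D ->
  fvec D d <= fvec D 0.
Proof.
move=> scD [[F FD cardF] dimD] forestD.
have nzD : set0 \notin facets D.
  by apply: set0_notin_facets FD _; rewrite -card_gt0 cardF.
have topD := top_faces_facets dimD.
rewrite (fvec0_cover scD) /fvec.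
apply: leq_trans (card_le_cover _) (subset_leq_card _).
  move=> S topS nzS.
  exact: forest_has_private_vertex forestD nzD (subset_trans topS topD) nzS.
by apply/bigcupsP=> G /setIdP[GD _]; apply: bigcup_sup GD.
Qed.
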